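(* Let $h>0$ and let $\Sigma=X(\mathbb R^2)$ be a helicoidal surface of pitch $h$ in $\mathbb H^2\times\mathbb R$, oriented by the unit normal $\eta$. Then $\Sigma$ is a rotator to MCF if and only if $\Sigma$ is a translator to MCF with respect to the Killing field $-h\partial_t$, i.e. if and only if $H=\langle -h\partial_t,\eta\rangle$ on $\Sigma$, where $\partial_t$ is the gradient of the height function $(p,t)\mapsto t$ of $\mathbb H^2\times\mathbb R$.
   Context: Let $\mathbb L^3=(\mathbb R^3,\langle\cdot,\cdot\rangle)$ with $\langle\cdot,\cdot\rangle=dx_1^2+dx_2^2-dx_3^2$, and let $\mathbb H^2=\{p\in\mathbb L^3:\langle p,p\rangle=-1,\ x_3(p)>0\}$ (hyperboloid model) with the induced metric. The space $\mathbb H^2\times\mathbb R\subset\mathbb L^3\times\mathbb R$ carries the product metric $\langle\cdot,\cdot\rangle_{\mathbb H^2}+dt^2$. Identify $\mathbb R^2$ with $\{x_3=0\}\subset\mathbb L^3$ and let $J(x_1,x_2)=(-x_2,x_1)$; $e^{vJ}$ is the Euclidean rotation of $\mathbb R^2$ by angle $v$. For a regular curve $\alpha:\mathbb R\to\mathbb R^2$ parametrized by Euclidean arc length, set $T=\alpha'$, $N=JT$, $\tau=\langle\alpha,T\rangle$, $\mu=\langle\alpha,N\rangle$ (Euclidean inner products), and $\phi=\sqrt{1+|\alpha|^2}$, so that $\sigma=(\alpha,\phi)$ is a curve in $\mathbb H^2$. For $h>0$, the helicoidal surface of pitch $h$ generated by $\sigma$ is $\Sigma=X(\mathbb R^2)$,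 $X(u,v)=(e^{vJ}\alpha(u),\phi(u),hv)$. It is oriented by the unit normal $\eta=\rho\,(e^{vJ}(aT+bN),\ \mu,\ c)$ (components: the $\mathbb R^2$-part, the $x_3$-part, and the $\mathbb R$-factor part in $\mathbb L^3\times\mathbb R$), where, evaluated at $u$, $a=\mu\phi'$, $b=(1+\mu^2)/\phi$, $c=-\phi'/h$ and $\rho=(a^2+b^2-\mu^2+c^2)^{-1/2}$. The mean curvature $H$ is taken with respect to $\eta$ (half the trace of the second fundamental form $\langle\bar\nabla_{\cdot}\cdot,\eta\rangle$). Let $\xi(x_1,x_2,x_3,t)=(-x_2,x_1,0,0)$ be the Killing field generated by the rotations $\mathrm{diag}(e^{tJ},1,1)$ about the axis $\{(0,0,1)\}\times\mathbb R$. The surface is a rotator to MCF if $H=\langle\xi,\eta\rangle$ everywhere on it. *)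

From Stdlib Require Import Reals.
From Coquelicot Require Import Coquelicot.
Open Scope R_scope.

Definition dot2 (p q : R * R) : R := fst p * fst q + snd p * snd q.
Definition add2 (p q : R * R) : R * R := (fst p + fst q, snd p + snd q).
Definition scal2 (k : R) (p : R * R) : R * R := (k * fst p, k * snd p).
Definition J2 (p : R * R) : R * R := (- snd p, fst p).
Definition rot (v : R) (p : R * R) : R * R :=
  (cos v * fst p - sin v * snd p, sin v * fst p + cos v * snd p).

(* ---------- L^3 x R, with metric dx1^2+dx2^2-dx3^2+dt^2 ---------- *)
Definition L4 := (R * R * R * R)%type.
Definition mk4 (a b c d : R) : L4 := (a, b, c, d).
Definition c1 (p : L4) : R := let '(x, _, _, _) := p in x.
Definition c2 (p : L4) : R := let '(_, x, _, _) := p in x.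
Definition c3 (p : L4) : R := let '(_, _, x, _) := p in x.
Definition c4 (p : L4) : R := let '(_, _, _, x) := p in x.
Definition lor (p q : L4) : R :=
  c1 p * c1 q + c2 p * c2 q - c3 p * c3 q + c4 p * c4 q.
Definition scal4 (k : R) (p : L4) : L4 := mk4 (k * c1 p) (k * c2 p) (k * c3 p) (k * c4 p).

Definition pu (F : R -> R -> L4) : R -> R -> L4 := fun u v =>
  mk4 (Derive (fun s => c1 (F s v)) u) (Derive (fun s => c2 (F s v)) u)
      (Derive (fun s => c3 (F s v)) u) (Derive (fun s => c4 (F s v)) u).
Definition pv (F : R -> R -> L4) : R -> R -> L4 := fun u v =>
  mk4 (Derive (fun s => c1 (F u s)) v) (Derive (fun s => c2 (F u s)) v)
      (Derive (fun s => c3 (F u s)) v) (Derive (fun s => c4 (F u s)) v).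

Section Curve.
Variable alpha : R -> R * R.
Definition al1 (u : R) : R := fst (alpha u).
Definition al2 (u : R) : R := snd (alpha u).
Definition Tc (u : R) : R * R := (Derive al1 u, Derive al2 u).
Definition Nc (u : R) : R * R := J2 (Tc u).
Definition tauc (u : R) : R := dot2 (alpha u) (Tc u).
Definition muc (u : R) : R := dot2 (alpha u) (Nc u).
Definition phic (u : R) : R := sqrt (1 + dot2 (alpha u) (alpha u)).

Variable h : R.
Definition Xh (u v : R) : L4 :=
  let r := rot v (alpha u) in mk4 (fst r) (snd r) (phic u) (h * v).

Definition ca (u : R) : R := muc u * Derive phic u.
Definition cb (u : R) : R := (1 + muc u ^ 2) / phic u.
Definition cc (u : R) : R := - Derive phic u / h.
Definition rhoc (u : R) : R :=
  / sqrt (ca u ^ 2 + cb u ^ 2 - muc u ^ 2 + cc u ^ 2).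
Definition eta (u v : R) : L4 :=
  let w := rot v (add2 (scal2 (ca u) (Tc u)) (scal2 (cb u) (Nc u))) in
  scal4 (rhoc u) (mk4 (fst w) (snd w) (muc u) (cc u)).

(* Mean curvature w.r.t. eta: half trace of the second fundamental form
   <nabla_{X_i} X_j, eta>, computed via first fundamental form
   E,F,G = <X_i,X_j> and the coefficients <X_ij, eta> (the ambient flat
   derivative of L^3 x R paired with eta, which is tangent to H^2 x R). *)
Definition meanH (u v : R) : R :=
  let Xu := pu Xh u v in let Xv := pv Xh u v in
  let E := lor Xu Xu in let F := lor Xu Xv in let G := lor Xv Xv in
  let L := lor (pu (pu Xh) u v) (eta u v) in
  let M := lor (pv (pu Xh) u v) (eta u v) in
  let N := lor (pv (pv Xh) u v) (eta u v) in
  (G * L - 2 * F * M + E * N) / (2 * (E * G - F ^ 2)).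
End Curve.

(* Killing field of the rotations diag(e^{tJ},1,1) *)
Definition xi (p : L4) : L4 := mk4 (- c2 p) (c1 p) 0 0.
Definition dt : L4 := mk4 0 0 0 1.

Definition is_rotator (alpha : R -> R * R) (h : R) : Prop :=
  forall u v, meanH alpha h u v = lor (xi (Xh alpha h u v)) (eta alpha h u v).
Definition is_translator (alpha : R -> R * R) (h : R) (K : L4) : Prop :=
  forall u v, meanH alpha h u v = lor K (eta alpha h u v).

(* Both Killing fields pair with [eta] through the profile curve only.  Since [xi] at
   [X u v] is [J] applied to the rotated curve and rotations commute with [J], the
   rotation pairing is [rho (b tau - a mu)], while [<-h d/dt, eta> = -h rho c = rho phi'].
   The identity [phi' = tau / phi] (differentiate [phi^2 = 1 + |alpha|^2]) makes
   [b tau - a mu = (1 + mu^2) tau / phi - mu^2 tau / phi] equal to [phi'].  Hence the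
   two mean curvature equations have the same right-hand side at every point. *)
From Pilot Require Import Defs.
From Stdlib Require Import Reals Lra.
From Coquelicot Require Import Coquelicot.
Open Scope R_scope.

Lemma dot2_J2_rot (v : R) (a p : R * R) :
  dot2 (J2 (rot v a)) (rot v p) = dot2 (J2 a) p.
Proof.
  unfold dot2, J2, rot; simpl.
  rewrite <- (Rmult_1_l (- snd a * fst p + fst a * snd p)), <- (sin2_cos2 v).
  unfold Rsqr; ring.
Qed.

Section ProfileCurve.

Variable alpha : R -> R * R.

Lemma phic_gt0 (u : R) : 0 < phic alpha u.
Proof. apply sqrt_lt_R0; unfold dot2; nra. Qed.

Lemma Derive_phic (u : R) :
  ex_derive (al1 alpha) u -> ex_derive (al2 alpha) u ->
  Derive (phic alpha) u = tauc alpha u / phic alpha u.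
Proof.
  intros H1 H2; apply is_derive_unique.
  assert (Hpos : 0 < 1 + (al1 alpha u * al1 alpha u + al2 alpha u * al2 alpha u)) by nra.
  pose proof (sqrt_lt_R0 _ Hpos) as Hsqrt.
  unfold phic, tauc, dot2, Tc; simpl.
  change (is_derive (fun x => sqrt (1 + (al1 alpha x * al1 alpha x + al2 alpha x * al2 alpha x)))
    u ((al1 alpha u * Derive (al1 alpha) u + al2 alpha u * Derive (al2 alpha) u)
       / sqrt (1 + (al1 alpha u * al1 alpha u + al2 alpha u * al2 alpha u)))).
  auto_derive; [repeat split; auto |].
  change (fun x : R => al1 alpha x) with (al1 alpha).
  change (fun x : R => al2 alpha x) with (al2 alpha).
  field; lra.
Qed.

Variable h : R.

Lemma lor_xi_eta (u v : R) :
  lor (xi (Xh alpha h u v)) (eta alpha h u v)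
  = rhoc alpha h u * (cb alpha u * tauc alpha u - ca alpha u * muc alpha u).
Proof.
  set (w := add2 (scal2 (ca alpha u) (Tc alpha u)) (scal2 (cb alpha u) (Nc alpha u))).
  transitivity (rhoc alpha h u * dot2 (J2 (rot v (alpha u))) (rot v w)).
  (* [Defs.] is needed: [c1] alone names a lemma of Stdlib's RiemannInt. *)
  { unfold lor, xi, Xh, eta, scal4, mk4, Defs.c1, Defs.c2, Defs.c3, Defs.c4, dot2, J2.
    fold w; simpl; ring. }
  rewrite dot2_J2_rot.
  unfold w, muc, tauc, Nc, add2, scal2, dot2, J2, Tc; simpl; ring.
Qed.

Lemma lor_vertical_eta (u v : R) : h <> 0 ->
  lor (scal4 (- h) dt) (eta alpha h u v) = rhoc alpha h u * Derive (phic alpha) u.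
Proof.
  intros Hh; unfold lor, eta, scal4, dt, mk4, Defs.c1, Defs.c2, Defs.c3, Defs.c4, cc.
  field; exact Hh.
Qed.

Lemma lor_xi_eta_vertical (u v : R) : h <> 0 ->
  ex_derive (al1 alpha) u -> ex_derive (al2 alpha) u ->
  lor (xi (Xh alpha h u v)) (eta alpha h u v) = lor (scal4 (- h) dt) (eta alpha h u v).
Proof.
  intros Hh H1 H2.
  rewrite lor_xi_eta, lor_vertical_eta by exact Hh.
  unfold ca, cb; rewrite Derive_phic by assumption.
  pose proof (phic_gt0 u) as Hphi.
  field; lra.
Qed.

End ProfileCurve.

Theorem theorem1p2 (alpha : R -> R * R) (h : R) (hpos : 0 < h)
  (Hsmooth : forall u, ex_derive (al1 alpha) u /\ ex_derive (al2 alpha) u /\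
     ex_derive (Derive (al1 alpha)) u /\ ex_derive (Derive (al2 alpha)) u)
  (Harc : forall u, (Derive (al1 alpha) u) ^ 2 + (Derive (al2 alpha) u) ^ 2 = 1) :
  is_rotator alpha h <-> is_translator alpha h (scal4 (- h) dt).
Proof.
  assert (Hpair : forall u v, lor (xi (Xh alpha h u v)) (eta alpha h u v)
                            = lor (scal4 (- h) dt) (eta alpha h u v)).
  { intros u v; destruct (Hsmooth u) as [H1 [H2 _]].
    apply lor_xi_eta_vertical; auto; lra. }
  unfold is_rotator, is_translator; split; intros H u v; rewrite H, Hpair; reflexivity.
Qed.
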